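(* Let $d, k_1, \ldots, k_d$ be positive integers, $n=k_1+\cdots+k_d$, and let $A$ be the $n\times n$ block matrix \[ A=\begin{pmatrix} A_1 & a_{12}\mathbf{1} & \cdots & a_{1d}\mathbf{1} \\ a_{21}\mathbf{1} & A_2 & \cdots & a_{2d}\mathbf{1} \\ \vdots & \vdots & \ddots & \vdots \\ a_{d1}\mathbf{1} & a_{d2}\mathbf{1} & \cdots & A_d \end{pmatrix}, \] where each $A_i$ is a normal, $r_{A_i}$-row regular complex $k_i\times k_i$ matrix and each $a_{ij}\mathbf{1}$ ($i\ne j$) is the $k_i\times k_j$ matrix all of whose entries equal $a_{ij}\in\mathbb{C}$. Let $\overline{A}$ be the $d\times d$ matrix with diagonal entries $\overline{A}_{ii}=r_{A_i}$ and off-diagonal entries $\overline{A}_{ij}=a_{ij}k_j$ for $i\neq j$. For each $i$, let $r_{A_i}=\lambda_1^{A_i},\lambda_2^{A_i},\ldots,\lambda_{k_i}^{A_i}$ be the eigenvalues of $A_i$ listed with multiplicity (so the multiset $\{\lambda_2^{A_i},\dots,\lambda_{k_i}^{A_i}\}$ is the spectrum of $A_i$ with one copy of $r_{A_i}$ removed). Then the characteristic polynomials satisfy \[ p_{A}(t)= p_{\overline{A}}(t) \prod_{\substack{1 \leq i \leq d, \\ 2 \leq j \leq k_i}} (t-\lambda_{j}^{A_i}), \] equivalently $p_A(t)\prod_{i=1}^d (t-r_{A_i}) = p_{\overline A}(t)\prod_{i=1}^d p_{A_i}(t)$.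
   Context: A complex square matrix $M$ is normal if $MM^*=M^*M$ ($M^*$ the conjugate transpose), and $r_M$-row regular if every row of $M$ sums to $r_M$ (for normal row regular $M$, $r_M$ is an eigenvalue of $M$). $p_M(t)=\det(tI-M)$ denotes the characteristic polynomial. *)

From HB Require Import structures.
From mathcomp Require Import all_boot all_order all_algebra.
Set Implicit Arguments. Unset Strict Implicit. Unset Printing Implicit Defensive.
Import Order.TTheory GRing.Theory Num.Theory.
Local Open Scope ring_scope.

Definition conjtr (C : numClosedFieldType) (m : nat) (M : 'M[C]_m) : 'M[C]_m :=
  map_mx Num.conj (M^T).

Definition normal_mx (C : numClosedFieldType) (m : nat) (M : 'M[C]_m) : Prop :=
  M *m conjtr M = conjtr M *m M.

Definition row_regular (C : numClosedFieldType) (m : nat) (M : 'M[C]_m) (r : C) : Prop :=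
  forall i : 'I_m, \sum_(j < m) M i j = r.

Definition block_A (C : numClosedFieldType) (d : nat) (k : 'I_d -> nat)
  (A : forall i : 'I_d, 'M[C]_(k i)) (a : 'I_d -> 'I_d -> C) : 'M[C]_(\sum_(i < d) k i) :=
  \mxdiag_(i < d) A i
  + \mxblock_(i < d, j < d) (const_mx (if i == j then 0 else a i j) : 'M[C]_(k i, k j)).

Definition quot_A (C : numClosedFieldType) (d : nat) (k : 'I_d -> nat)
  (r : 'I_d -> C) (a : 'I_d -> 'I_d -> C) : 'M[C]_d :=
  \matrix_(i < d, j < d) (if i == j then r i else a i j * (k j)%:R).

From HB Require Import structures.
From mathcomp Require Import all_boot all_order all_algebra.
Set Implicit Arguments. Unset Strict Implicit. Unset Printing Implicit Defensive.
Import Order.TTheory GRing.Theory Num.Theory.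
Local Open Scope ring_scope.

(* Fix [t] different from every [r i] and let [E] be the indicator matrix of
   the blocks.  Row regularity gives [D E = E T] for [D = diag (t - A_i)] and
   [T = diag (t - r_i)], while [t - A = D - E Ã E^T] with [Ã] the matrix of the
   off-diagonal coefficients [a i j].  Factoring out [D] and [T], Sylvester's
   identity [det (1 - X Y) = det (1 - Y X)] turns [det (t - A)] into the [d x d]
   determinant [det (T - Ã E^T E) = det (t - Abar)], so that
   [p_A(t) prod_i (t - r_i) = p_Abar(t) prod_i p_(A_i)(t)] off finitely many
   points, hence as polynomials. *)

Section BlockIndicator.
Variables (R : pzRingType) (d : nat) (k : 'I_d -> nat).

Definition block_indicator : 'M[R]_(\sum_(i < d) k i, d) :=
  \mxcol_i (\matrix_(p < k i, j < d) (i == j)%:R).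

Definition offdiag_mx (a : 'I_d -> 'I_d -> R) : 'M[R]_d :=
  \matrix_(i, j) (if i == j then 0 else a i j).

Lemma mxdiag_mul_block_indicator (B : forall i, 'M[R]_(k i)) (c : 'I_d -> R) :
  (forall i p, \sum_q B i p q = c i) ->
  \mxdiag_i B i *m block_indicator = block_indicator *m diag_mx (\row_i c i).
Proof.
move=> rowsum; rewrite /block_indicator mul_mxdiag_mxcol mxcol_mul.
apply: eq_mxcol => i; apply/matrixP => p j; rewrite mul_mx_diag !mxE.
under eq_bigr do rewrite mxE.
rewrite -big_distrl /= rowsum.
by case: eqP => [->|_]; rewrite ?mulr1 ?mul1r ?mulr0 ?mul0r.
Qed.

Lemma tr_block_indicator_mul :
  block_indicator^T *m block_indicator = diag_mx (\row_i (k i)%:R).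
Proof.
rewrite /block_indicator tr_mxcol mul_mxrow_mxcol; apply/matrixP => l j.
rewrite summxE !mxE (bigD1 l) //= big1 => [|i /negPf nli]; last first.
  by rewrite mxE big1 // => q _; rewrite !mxE nli mul0r.
rewrite mxE addr0; under eq_bigr do rewrite !mxE eqxx mul1r.
by rewrite sumr_const card_ord; case: eqP; rewrite ?mulr1n ?mulr0n ?mul0rn.
Qed.

End BlockIndicator.

Lemma det_castmx_sq (R : comPzRingType) m n (e : m = n) (M : 'M[R]_m) :
  \det (castmx (e, e) M) = \det M.
Proof. by case: n / e; rewrite castmx_id. Qed.

Lemma det_mxdiag (R : comPzRingType) (p : nat) (p_ : 'I_p -> nat)
    (B : forall i, 'M[R]_(p_ i)) :
  \det (\mxdiag_i B i) = \prod_i \det (B i).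
Proof.
elim: p p_ B => [|p IHp] p_ B.
  rewrite [RHS]big_ord0; move: (\mxdiag_i B i); rewrite big_ord0 => M.
  by rewrite det_mx00.
by rewrite mxdiag_recl det_castmx_sq det_ublock IHp big_ord_recl.
Qed.

Lemma det_sylvester (R : comPzRingType) m n (X : 'M[R]_(m, n)) (Y : 'M[R]_(n, m)) :
  \det (1%:M - X *m Y) = \det (1%:M - Y *m X).
Proof.
have factorL : block_mx 1%:M X Y 1%:M =
    block_mx 1%:M 0 Y 1%:M *m block_mx 1%:M X 0 (1%:M - Y *m X).
  rewrite mulmx_block !mul1mx ?mul0mx ?mulmx1 ?mulmx0 ?addr0 ?add0r.
  by rewrite addrC subrK.
have factorR : block_mx 1%:M X Y 1%:M =
    block_mx (1%:M - X *m Y) X 0 1%:M *m block_mx 1%:M 0 Y 1%:M.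
  rewrite mulmx_block !mul1mx ?mul0mx ?mulmx1 ?mulmx0 ?addr0 ?add0r.
  by rewrite subrK.
have := congr1 determinant factorL; rewrite factorR !det_mulmx.
by rewrite !det_lblock !det_ublock !det1 !mul1r !mulr1.
Qed.

Lemma det_sub_intertwined (R : comUnitRingType) m n
    (D : 'M[R]_m) (E : 'M[R]_(m, n)) (T : 'M[R]_n) (M : 'M[R]_(n, m)) :
  T \in unitmx -> D *m E = E *m T ->
  \det (D - E *m M) * \det T = \det D * \det (T - M *m E).
Proof.
move=> Tunit DE.
have DET : D *m (E *m invmx T) = E by rewrite mulmxA DE -mulmxA mulmxV ?mulmx1.
have -> : D - E *m M = D *m (1%:M - E *m (invmx T *m M)).
  by rewrite mulmxBr mulmx1 (mulmxA E) mulmxA DET.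
have -> : T - M *m E = T *m (1%:M - invmx T *m M *m E).
  by rewrite mulmxBr mulmx1 !mulmxA mulmxV // mul1mx.
by rewrite !det_mulmx det_sylvester mulrAC mulrA.
Qed.

Lemma horner_char_poly (R : comNzRingType) n (M : 'M[R]_n) t :
  (char_poly M).[t] = \det (t%:M - M).
Proof.
rewrite /char_poly -horner_evalE -det_map_mx; congr (\det _).
apply/matrixP => i j; rewrite !mxE /= horner_evalE.
by rewrite hornerD hornerN hornerMn hornerX hornerC.
Qed.

Lemma poly_eq_off_roots (R : numDomainType) (p q s : {poly R}) :
  s != 0 -> (forall t, ~~ root s t -> p.[t] = q.[t]) -> p = q.
Proof.
move=> s_neq0 eq_pq; apply/eqP; rewrite -subr_eq0.
suff : (p - q) * s == 0 by rewrite mulf_eq0 (negPf s_neq0) orbF.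
set P := (p - q) * s; apply/eqP.
have P_root t : root P t.
  rewrite rootM; case: (boolP (root s t)) => [|/eq_pq]; first by rewrite orbT.
  by rewrite rootE hornerD hornerN => ->; rewrite subrr eqxx.
apply: (@roots_geq_poly_eq0 _ P [seq i%:R | i <- iota 0 (size P)]).
- by apply/allP => x _; exact: P_root.
- by rewrite map_inj_uniq ?iota_uniq // => x y /eqP; rewrite eqr_nat => /eqP.
- by rewrite size_map size_iota.
Qed.

Section BlockMatrix.
Variables (C : numClosedFieldType) (d : nat) (k : 'I_d -> nat).
Variables (A : forall i : 'I_d, 'M[C]_(k i)) (r : 'I_d -> C) (a : 'I_d -> 'I_d -> C).

Local Notation E := (block_indicator C k).

Lemma row_regular_scalar_sub m (M : 'M[C]_m) (c t : C) :
  row_regular M c -> row_regular (t%:M - M) (t - c).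
Proof.
move=> reg i; under eq_bigr do rewrite !mxE.
rewrite sumrB reg (bigD1 i) //= big1 => [|j /negPf nij]; last by rewrite eq_sym nij.
by rewrite eqxx addr0.
Qed.

Lemma block_A_decomp :
  block_A A a = \mxdiag_i A i + E *m offdiag_mx a *m E^T.
Proof.
rewrite /block_A /block_indicator tr_mxcol mxcol_mul mul_mxcol_mxrow.
congr (_ + _); apply: eq_mxblock => i j; apply/matrixP => p q; rewrite !mxE.
rewrite (bigD1 j) //= big1 => [|l /negPf nlj]; last by rewrite !mxE eq_sym nlj mulr0.
rewrite !mxE eqxx mulr1 addr0 (bigD1 i) //= big1 => [|l /negPf nli]; last first.
  by rewrite !mxE eq_sym nli mul0r.
by rewrite !mxE eqxx mul1r addr0.
Qed.

Lemma quot_A_decomp t :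
  t%:M - quot_A k r a
    = diag_mx (\row_i (t - r i)) - offdiag_mx a *m diag_mx (\row_i (k i)%:R).
Proof.
apply/matrixP => i j; rewrite mul_mx_diag !mxE.
by case: eqP => [->|_]; rewrite ?mulr1n ?mul0r ?subr0 ?mulr0n.
Qed.

Lemma det_block_A_sub t :
  (forall i, row_regular (A i) (r i)) -> (forall i, t != r i) ->
  \det (t%:M - block_A A a) * \prod_i (t - r i)
    = \prod_i \det (t%:M - A i) * \det (t%:M - quot_A k r a).
Proof.
move=> reg t_neq_r; set T := diag_mx (\row_i (t - r i)).
have detT : \det T = \prod_i (t - r i) by rewrite det_diag; under eq_bigr do rewrite mxE.
have Tunit : T \in unitmx.
  by rewrite unitmxE detT unitfE; apply/prodf_neq0 => i _; rewrite subr_eq0.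
have DE : \mxdiag_i (t%:M - A i) *m E = E *m T.
  by apply: mxdiag_mul_block_indicator => i; apply: row_regular_scalar_sub.
have := det_sub_intertwined (offdiag_mx a *m E^T) Tunit DE.
rewrite -detT det_mxdiag -mulmxA tr_block_indicator_mul -quot_A_decomp => <-.
by rewrite mxdiagB mxdiagZ block_A_decomp opprD addrA mulmxA.
Qed.

End BlockMatrix.

Theorem mainTheorem4 (C : numClosedFieldType) (d : nat) (k : 'I_d -> nat)
  (A : forall i : 'I_d, 'M[C]_(k i)) (r : 'I_d -> C) (a : 'I_d -> 'I_d -> C)
  (lam : 'I_d -> seq C) :
  (0 < d)%N ->
  (forall i, (0 < k i)%N) ->
  (forall i, normal_mx (A i)) ->
  (forall i, row_regular (A i) (r i)) ->
  (* eigenvalues of A i with multiplicity: r i, lambda_2, ..., lambda_{k i} *)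
  (forall i, char_poly (A i) = \prod_(l <- r i :: lam i) ('X - l%:P)) ->
  char_poly (block_A A a)
    = char_poly (quot_A k r a) * \prod_(i < d) \prod_(l <- lam i) ('X - l%:P).
Proof.
move=> _ _ _ reg charA.
pose rp : {poly C} := \prod_i ('X - (r i)%:P).
have rp_neq0 : rp != 0 by rewrite monic_neq0 // monic_prod_XsubC.
have rp_char : char_poly (block_A A a) * rp
               = char_poly (quot_A k r a) * \prod_i char_poly (A i).
  apply: (poly_eq_off_roots rp_neq0) => t.
  rewrite rootE !hornerM !horner_prod !horner_char_poly.
  under eq_bigr do rewrite hornerXsubC.
  move/prodf_neq0 => t_neq_r; under [in RHS]eq_bigr do rewrite horner_char_poly.
  rewrite det_block_A_sub // => [|i]; first exact: mulrC.
  by rewrite -subr_eq0 t_neq_r.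
apply: (mulIf rp_neq0); rewrite rp_char.
under eq_bigr do rewrite charA big_cons.
by rewrite big_split /= -/rp -mulrA (mulrC rp).
Qed.
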